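(* Let $(\mathcal{C},\tau^{\mathcal{C}}),(\mathcal{D},\tau^{\mathcal{D}}),(\mathcal{W},\tau^{\mathcal{W}})$ be braided $\mathcal{E}$-modules, let $F,G:\mathcal{C}\times\mathcal{D}\to\mathcal{W}$ be braiding-preserved $\mathcal{E}$-bilinear bifunctors, and let $\alpha:F\Rightarrow G$ be a morphism in $\mathrm{Fun}^{\mathrm{bal}}_{\mathcal{E}}(\mathcal{C},\mathcal{D};\mathcal{W})$. Then for each $c\in\mathcal{C}$, $\alpha_{c,-}:(F(c,-),s^{F2})\Rightarrow(G(c,-),s^{G2})$ is a left $\mathcal{E}$-module natural transformation, i.e. $s^{G2}_{e,d}\circ\alpha_{c,\,e\odot d}=(1_e\odot\alpha_{c,d})\circ s^{F2}_{e,d}$ for all $e\in\mathcal{E}$, $d\in\mathcal{D}$.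
   Context: $\Bbbk$ is an algebraically closed field of characteristic zero, $\mathcal{E}$ a symmetric fusion category over $\Bbbk$ with symmetric braiding $r$. A braided $\mathcal{E}$-module is a finite semisimple $\Bbbk$-linear abelian category $\mathcal{C}$ with a left $\mathcal{E}$-action $e\odot x$ and a right $\mathcal{E}$-action $x\odot e$ (associativity isomorphisms suppressed), together with natural isomorphisms $\tau^{\mathcal{C}1}_{e,x}:e\odot x\to x\odot e$, $\tau^{\mathcal{C}2}_{x,e}:x\odot e\to e\odot x$ whose composite $\tau^{\mathcal{C}}_{e,x}=\tau^{\mathcal{C}2}_{x,e}\circ\tau^{\mathcal{C}1}_{e,x}$ satisfies $\tau^{\mathcal{C}}_{\mathbf{1},x}=\mathrm{id}$ and the compatibilities $\tau^1_{e,e'\odot x}=(1\odot\tau^1_{e,x})(r_{e,e'}\odot 1)$, $\tau^2_{e'\odot x,e}=(r_{e',e}\odot1)(1\odot\tau^2_{x,e})$, $\tau^1_{e\otimes e',x}=(\tau^1_{e,x}\odot1)(1\odot\tau^1_{e',x})$, $\tau^2_{x,e\otimes e'}=(1\odot\tau^2_{x,e'})(\tau^2_{x,e}\odot1)$. An $\mathcal{E}$-bilinear bifunctor $F:\mathcal{C}\times\mathcal{D}\to\mathcal{W}$ is a functor with natural isomorphisms $s^{F1}_{e,c}:F(e\odot c,d)\to e\odot F(c,d)$ and $s^{F2}_{e,d}:F(c,e\odot d)\to e\odot F(c,d)$ making every $F(-,d)$ and $F(c,-)$ a left $\mathcal{E}$-module functor and every $F(f,-)$, $F(-,g)$ a left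 $\mathcal{E}$-module natural transformation. Put $b_{c,e,d}=(s^{F2}_{e,d})^{-1}\circ s^{F1}_{e,c}\circ F(\tau^{\mathcal{C}2}_{c,e},1):F(c\odot e,d)\to F(c,e\odot d)$. $F$ is a braiding-preserved $\mathcal{E}$-bilinear bifunctor if $b$ makes $F$ a balanced $\mathcal{E}$-module functor and for all $e,c,d$: $s^{F1}_{e,c}\circ F(\tau^{\mathcal{C}}_{e,c},1)=\tau^{\mathcal{W}}_{e,F(c,d)}\circ s^{F1}_{e,c}$ and $(s^{F2}_{e,d})^{-1}\circ\tau^{\mathcal{W}}_{e,F(c,d)}=F(1,\tau^{\mathcal{D}}_{e,d})\circ(s^{F2}_{e,d})^{-1}$. $\mathrm{Fun}^{\mathrm{bal}}_{\mathcal{E}}(\mathcal{C},\mathcal{D};\mathcal{W})$ has these bifunctors as objects; a morphism $\alpha:F\Rightarrow G$ is a natural transformation with $\alpha_{c,e\odot d}\circ b^F_{c,e,d}=b^G_{c,e,d}\circ\alpha_{c\odot e,d}$ and $s^{G1}_{e,c}\circ\alpha_{e\odot c,d}=(1_e\odot\alpha_{c,d})\circ s^{F1}_{e,c}$ for all $c,e,d$. *)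

(* Equality of morphisms is Leibniz equality. *)

Set Implicit Arguments.
Unset Strict Implicit.

Record Category := {
  ob :> Type;
  hom : ob -> ob -> Type;
  idm : forall {a}, hom a a;
  comp : forall {a b c}, hom b c -> hom a b -> hom a c;
  comp_id_l : forall a b (f : hom a b), comp idm f = f;
  comp_id_r : forall a b (f : hom a b), comp f idm = f;
  comp_assoc : forall a b c d (f : hom a b) (g : hom b c) (h : hom c d),
      comp h (comp g f) = comp (comp h g) f
}.
Arguments hom {_} _ _.
Arguments idm {_ _}.
Arguments comp {_ _ _ _} _ _.

Declare Scope cat_scope.
Open Scope cat_scope.
Notation "g ∘ f" := (comp g f) (at level 40, left associativity) : cat_scope.
Notation "1_ a" := (@idm _ a) (at level 9, a at level 8) : cat_scope.

Record MonoidalCategory := {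
  mc_cat :> Category;
  tens : mc_cat -> mc_cat -> mc_cat;
  tensm : forall {a a' b b' : mc_cat}, hom a a' -> hom b b' -> hom (tens a b) (tens a' b');
  tensm_id : forall a b : mc_cat, tensm (@idm _ a) (@idm _ b) = idm;
  tensm_comp : forall (a a' a'' b b' b'' : mc_cat) (f : hom a a') (f' : hom a' a'')
      (g : hom b b') (g' : hom b' b''), tensm (f' ∘ f) (g' ∘ g) = tensm f' g' ∘ tensm f g;
  munit : mc_cat;
  massoc : forall a b c : mc_cat, hom (tens (tens a b) c) (tens a (tens b c));
  massoc_inv : forall a b c : mc_cat, hom (tens a (tens b c)) (tens (tens a b) c);
  massoc_iso1 : forall a b c, massoc_inv a b c ∘ massoc a b c = idm;
  massoc_iso2 : forall a b c, massoc a b c ∘ massoc_inv a b c = idm;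
  massoc_nat : forall (a a' b b' c c' : mc_cat) (f : hom a a') (g : hom b b') (h : hom c c'),
      massoc a' b' c' ∘ tensm (tensm f g) h = tensm f (tensm g h) ∘ massoc a b c;
  lunit : forall a : mc_cat, hom (tens munit a) a;
  lunit_inv : forall a : mc_cat, hom a (tens munit a);
  lunit_iso1 : forall a, lunit_inv a ∘ lunit a = idm;
  lunit_iso2 : forall a, lunit a ∘ lunit_inv a = idm;
  lunit_nat : forall (a a' : mc_cat) (f : hom a a'), lunit a' ∘ tensm idm f = f ∘ lunit a;
  runit : forall a : mc_cat, hom (tens a munit) a;
  runit_inv : forall a : mc_cat, hom a (tens a munit);
  runit_iso1 : forall a, runit_inv a ∘ runit a = idm;
  runit_iso2 : forall a, runit a ∘ runit_inv a = idm;
  runit_nat : forall (a a' : mc_cat) (f : hom a a'), runit a' ∘ tensm f idm = f ∘ runit a;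
  pentagon : forall a b c d : mc_cat,
      massoc a b (tens c d) ∘ massoc (tens a b) c d
      = tensm idm (massoc b c d) ∘ massoc a (tens b c) d ∘ tensm (massoc a b c) idm;
  triangle : forall a b : mc_cat,
      tensm idm (lunit b) ∘ massoc a munit b = tensm (runit a) idm
}.
Arguments tens {_} _ _.
Arguments tensm {_ _ _ _ _} _ _.
Arguments munit {_}.
Arguments massoc {_} _ _ _.
Arguments massoc_inv {_} _ _ _.
Arguments lunit {_} _.
Arguments runit {_} _.

Record SymmetricMonoidalCategory := {
  smc :> MonoidalCategory;
  braid : forall a b : smc, hom (tens a b) (tens b a);
  braid_nat : forall (a a' b b' : smc) (f : hom a a') (g : hom b b'),
      braid a' b' ∘ tensm f g = tensm g f ∘ braid a b;
  braid_sym : forall a b : smc, braid b a ∘ braid a b = idm;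
  hexagon : forall a b c : smc,
      massoc b c a ∘ braid a (tens b c) ∘ massoc a b c
      = tensm idm (braid a c) ∘ massoc b a c ∘ tensm (braid a b) idm
}.
Arguments braid {_} _ _.

Record BraidedModule (E : SymmetricMonoidalCategory) := {
  bm_cat :> Category;
  bl : E -> bm_cat -> bm_cat;
  blm : forall {e e' : E} {x x' : bm_cat}, hom e e' -> hom x x' -> hom (bl e x) (bl e' x');
  blm_id : forall (e : E) (x : bm_cat), blm (@idm _ e) (@idm _ x) = idm;
  blm_comp : forall (e e' e'' : E) (x x' x'' : bm_cat) (f : hom e e') (f' : hom e' e'')
      (g : hom x x') (g' : hom x' x''), blm (f' ∘ f) (g' ∘ g) = blm f' g' ∘ blm f g;
  blassoc : forall (e e' : E) (x : bm_cat), hom (bl (tens e e') x) (bl e (bl e' x));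
  blassoc_inv : forall (e e' : E) (x : bm_cat), hom (bl e (bl e' x)) (bl (tens e e') x);
  blassoc_iso1 : forall e e' x, blassoc_inv e e' x ∘ blassoc e e' x = idm;
  blassoc_iso2 : forall e e' x, blassoc e e' x ∘ blassoc_inv e e' x = idm;
  blassoc_nat : forall (e1 e1' e2 e2' : E) (x x' : bm_cat) (f : hom e1 e1') (g : hom e2 e2')
      (h : hom x x'), blassoc e1' e2' x' ∘ blm (tensm f g) h = blm f (blm g h) ∘ blassoc e1 e2 x;
  blunit : forall x : bm_cat, hom (bl munit x) x;
  blunit_inv : forall x : bm_cat, hom x (bl munit x);
  blunit_iso1 : forall x, blunit_inv x ∘ blunit x = idm;
  blunit_iso2 : forall x, blunit x ∘ blunit_inv x = idm;
  blunit_nat : forall (x x' : bm_cat) (h : hom x x'), blunit x' ∘ blm idm h = h ∘ blunit x;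
  blpentagon : forall (e1 e2 e3 : E) (x : bm_cat),
      blassoc e1 e2 (bl e3 x) ∘ blassoc (tens e1 e2) e3 x
      = blm idm (blassoc e2 e3 x) ∘ blassoc e1 (tens e2 e3) x ∘ blm (massoc e1 e2 e3) idm;
  bltriangle : forall (e : E) (x : bm_cat),
      blm idm (blunit x) ∘ blassoc e munit x = blm (runit e) idm;
  br : bm_cat -> E -> bm_cat;
  brm : forall {x x' : bm_cat} {e e' : E}, hom x x' -> hom e e' -> hom (br x e) (br x' e');
  brm_id : forall (x : bm_cat) (e : E), brm (@idm _ x) (@idm _ e) = idm;
  brm_comp : forall (x x' x'' : bm_cat) (e e' e'' : E) (g : hom x x') (g' : hom x' x'')
      (f : hom e e') (f' : hom e' e''), brm (g' ∘ g) (f' ∘ f) = brm g' f' ∘ brm g f;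
  brassoc : forall (x : bm_cat) (e e' : E), hom (br x (tens e e')) (br (br x e) e');
  brassoc_inv : forall (x : bm_cat) (e e' : E), hom (br (br x e) e') (br x (tens e e'));
  brassoc_iso1 : forall x e e', brassoc_inv x e e' ∘ brassoc x e e' = idm;
  brassoc_iso2 : forall x e e', brassoc x e e' ∘ brassoc_inv x e e' = idm;
  brassoc_nat : forall (x x' : bm_cat) (e1 e1' e2 e2' : E) (h : hom x x') (f : hom e1 e1')
      (g : hom e2 e2'), brassoc x' e1' e2' ∘ brm h (tensm f g) = brm (brm h f) g ∘ brassoc x e1 e2;
  brunit : forall x : bm_cat, hom (br x munit) x;
  brunit_inv : forall x : bm_cat, hom x (br x munit);
  brunit_iso1 : forall x, brunit_inv x ∘ brunit x = idm;
  brunit_iso2 : forall x, brunit x ∘ brunit_inv x = idm;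
  brunit_nat : forall (x x' : bm_cat) (h : hom x x'), brunit x' ∘ brm h idm = h ∘ brunit x;
  brpentagon : forall (x : bm_cat) (e1 e2 e3 : E),
      brassoc (br x e1) e2 e3 ∘ brassoc x e1 (tens e2 e3)
      = brm (brassoc x e1 e2) idm ∘ brassoc x (tens e1 e2) e3 ∘ brm idm (massoc_inv e1 e2 e3);
  brtriangle : forall (x : bm_cat) (e : E),
      brm (brunit x) idm ∘ brassoc x munit e = brm idm (lunit e);
  bmid : forall (e : E) (x : bm_cat) (e' : E), hom (br (bl e x) e') (bl e (br x e'));
  bmid_inv : forall (e : E) (x : bm_cat) (e' : E), hom (bl e (br x e')) (br (bl e x) e');
  bmid_iso1 : forall e x e', bmid_inv e x e' ∘ bmid e x e' = idm;
  bmid_iso2 : forall e x e', bmid e x e' ∘ bmid_inv e x e' = idm;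
  bmid_nat : forall (e e' : E) (x x' : bm_cat) (f' f'' : E) (f : hom e e') (h : hom x x')
      (g : hom f' f''), bmid e' x' f'' ∘ brm (blm f h) g = blm f (brm h g) ∘ bmid e x f';
  bmid_pent_l : forall (e1 e2 : E) (x : bm_cat) (e3 : E),
      blassoc e1 e2 (br x e3) ∘ bmid (tens e1 e2) x e3
      = blm idm (bmid e2 x e3) ∘ bmid e1 (bl e2 x) e3 ∘ brm (blassoc e1 e2 x) idm;
  bmid_pent_r : forall (e1 : E) (x : bm_cat) (e2 e3 : E),
      bmid e1 (br x e2) e3 ∘ brm (bmid e1 x e2) idm ∘ brassoc (bl e1 x) e2 e3
      = blm idm (brassoc x e2 e3) ∘ bmid e1 x (tens e2 e3);
  tau1 : forall (e : E) (x : bm_cat), hom (bl e x) (br x e);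
  tau1_inv : forall (e : E) (x : bm_cat), hom (br x e) (bl e x);
  tau1_iso1 : forall e x, tau1_inv e x ∘ tau1 e x = idm;
  tau1_iso2 : forall e x, tau1 e x ∘ tau1_inv e x = idm;
  tau1_nat : forall (e e' : E) (x x' : bm_cat) (f : hom e e') (h : hom x x'),
      tau1 e' x' ∘ blm f h = brm h f ∘ tau1 e x;
  tau2 : forall (x : bm_cat) (e : E), hom (br x e) (bl e x);
  tau2_inv : forall (x : bm_cat) (e : E), hom (bl e x) (br x e);
  tau2_iso1 : forall x e, tau2_inv x e ∘ tau2 x e = idm;
  tau2_iso2 : forall x e, tau2 x e ∘ tau2_inv x e = idm;
  tau2_nat : forall (x x' : bm_cat) (e e' : E) (h : hom x x') (f : hom e e'),
      tau2 x' e' ∘ brm h f = blm f h ∘ tau2 x e;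
  (* tau_{1,x} = id, where tau_{e,x} = tau2_{x,e} ∘ tau1_{e,x} *)
  tau_unit : forall x : bm_cat, tau2 x munit ∘ tau1 munit x = idm;
  (* tau1_{e, e'⊙x} = (1 ⊙ tau1_{e,x}) (r_{e,e'} ⊙ 1), associators made explicit *)
  tau1_compat_l : forall (e e' : E) (x : bm_cat),
      bmid e' x e ∘ tau1 e (bl e' x) ∘ blassoc e e' x
      = blm idm (tau1 e x) ∘ blassoc e' e x ∘ blm (braid e e') idm;
  (* tau2_{e'⊙x, e} = (r_{e',e} ⊙ 1)(1 ⊙ tau2_{x,e}) *)
  tau2_compat_l : forall (e e' : E) (x : bm_cat),
      tau2 (bl e' x) e
      = blassoc e e' x ∘ blm (braid e' e) idm ∘ blassoc_inv e' e x
        ∘ blm idm (tau2 x e) ∘ bmid e' x e;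
  (* tau1_{e⊗e', x} = (tau1_{e,x} ⊙ 1)(1 ⊙ tau1_{e',x}) *)
  tau1_compat_t : forall (e e' : E) (x : bm_cat),
      brassoc x e e' ∘ tau1 (tens e e') x
      = brm (tau1 e x) idm ∘ bmid_inv e x e' ∘ blm idm (tau1 e' x) ∘ blassoc e e' x;
  (* tau2_{x, e⊗e'} = (1 ⊙ tau2_{x,e'})(tau2_{x,e} ⊙ 1) *)
  tau2_compat_t : forall (x : bm_cat) (e e' : E),
      blassoc e e' x ∘ tau2 x (tens e e')
      = blm idm (tau2 x e') ∘ bmid e x e' ∘ brm (tau2 x e) idm ∘ brassoc x e e'
}.
Arguments bl {_ _} _ _.
Arguments blm {_ _ _ _ _ _} _ _.
Arguments blassoc {_ _} _ _ _.
Arguments blassoc_inv {_ _} _ _ _.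
Arguments blunit {_ _} _.
Arguments br {_ _} _ _.
Arguments brm {_ _ _ _ _ _} _ _.
Arguments brassoc {_ _} _ _ _.
Arguments brunit {_ _} _.
Arguments bmid {_ _} _ _ _.
Arguments bmid_inv {_ _} _ _ _.
Arguments tau1 {_ _} _ _.
Arguments tau2 {_ _} _ _.

Definition tau {E : SymmetricMonoidalCategory} {B : BraidedModule E} (e : E) (x : B)
  : hom (bl e x) (bl e x) := tau2 x e ∘ tau1 e x.

Record Bifunctor (C D W : Category) := {
  bf_ob :> C -> D -> W;
  bf_hom : forall {c c' : C} {d d' : D}, hom c c' -> hom d d' -> hom (bf_ob c d) (bf_ob c' d');
  bf_id : forall c d, bf_hom (@idm _ c) (@idm _ d) = idm;
  bf_comp : forall (c c' c'' : C) (d d' d'' : D) (f : hom c c') (f' : hom c' c'')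
      (g : hom d d') (g' : hom d' d''), bf_hom (f' ∘ f) (g' ∘ g) = bf_hom f' g' ∘ bf_hom f g
}.
Arguments bf_hom {_ _ _} _ {_ _ _ _} _ _.

(* E-bilinear bifunctor: natural isomorphisms
     s1_{e,c} : F(e⊙c, d) -> e⊙F(c,d),   s2_{e,d} : F(c, e⊙d) -> e⊙F(c,d)
   (natural in all variables), making each F(-,d) and F(c,-) a left
   E-module functor; naturality of s1 in d and of s2 in c says that each
   F(-,g) and F(f,-) is a left E-module natural transformation. *)
Record BilinearBifunctor (E : SymmetricMonoidalCategory) (C D W : BraidedModule E) := {
  bb_F :> Bifunctor C D W;
  s1 : forall (e : E) (c : C) (d : D), hom (bb_F (bl e c) d) (bl e (bb_F c d));
  s1_inv : forall (e : E) (c : C) (d : D), hom (bl e (bb_F c d)) (bb_F (bl e c) d);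
  s1_iso1 : forall e c d, s1_inv e c d ∘ s1 e c d = idm;
  s1_iso2 : forall e c d, s1 e c d ∘ s1_inv e c d = idm;
  s1_nat : forall (e e' : E) (c c' : C) (d d' : D) (f : hom e e') (g : hom c c') (h : hom d d'),
      s1 e' c' d' ∘ bf_hom bb_F (blm f g) h = blm f (bf_hom bb_F g h) ∘ s1 e c d;
  s1_assoc : forall (e e' : E) (c : C) (d : D),
      blassoc e e' (bb_F c d) ∘ s1 (tens e e') c d
      = blm idm (s1 e' c d) ∘ s1 e (bl e' c) d ∘ bf_hom bb_F (blassoc e e' c) idm;
  s1_unit : forall (c : C) (d : D),
      blunit (bb_F c d) ∘ s1 munit c d = bf_hom bb_F (blunit c) idm;
  s2 : forall (e : E) (c : C) (d : D), hom (bb_F c (bl e d)) (bl e (bb_F c d));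
  s2_inv : forall (e : E) (c : C) (d : D), hom (bl e (bb_F c d)) (bb_F c (bl e d));
  s2_iso1 : forall e c d, s2_inv e c d ∘ s2 e c d = idm;
  s2_iso2 : forall e c d, s2 e c d ∘ s2_inv e c d = idm;
  s2_nat : forall (e e' : E) (c c' : C) (d d' : D) (f : hom e e') (g : hom c c') (h : hom d d'),
      s2 e' c' d' ∘ bf_hom bb_F g (blm f h) = blm f (bf_hom bb_F g h) ∘ s2 e c d;
  s2_assoc : forall (e e' : E) (c : C) (d : D),
      blassoc e e' (bb_F c d) ∘ s2 (tens e e') c d
      = blm idm (s2 e' c d) ∘ s2 e c (bl e' d) ∘ bf_hom bb_F idm (blassoc e e' d);
  s2_unit : forall (c : C) (d : D),
      blunit (bb_F c d) ∘ s2 munit c d = bf_hom bb_F idm (blunit d)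
}.
Arguments s1 {_ _ _ _} _ _ _ _.
Arguments s2 {_ _ _ _} _ _ _ _.
Arguments s2_inv {_ _ _ _} _ _ _ _.

Definition bal {E : SymmetricMonoidalCategory} {C D W : BraidedModule E}
  (F : BilinearBifunctor C D W) (c : C) (e : E) (d : D)
  : hom (F (br c e) d) (F c (bl e d)) :=
  s2_inv F e c d ∘ s1 F e c d ∘ bf_hom F (tau2 c e) idm.

Definition is_balanced {E : SymmetricMonoidalCategory} {C D W : BraidedModule E}
  (F : BilinearBifunctor C D W) : Prop :=
  (forall (c c' : C) (e e' : E) (d d' : D) (g : hom c c') (f : hom e e') (h : hom d d'),
      bal F c' e' d' ∘ bf_hom F (brm g f) h = bf_hom F g (blm f h) ∘ bal F c e d) /\
  (forall (c : C) (e e' : E) (d : D),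
      bf_hom F idm (blassoc_inv e e' d) ∘ bal F c e (bl e' d) ∘ bal F (br c e) e' d
        ∘ bf_hom F (brassoc c e e') idm
      = bal F c (tens e e') d) /\
  (forall (c : C) (d : D),
      bf_hom F idm (blunit d) ∘ bal F c munit d = bf_hom F (brunit c) idm).

Definition braiding_preserved {E : SymmetricMonoidalCategory} {C D W : BraidedModule E}
  (F : BilinearBifunctor C D W) : Prop :=
  is_balanced F /\
  (forall (e : E) (c : C) (d : D),
      s1 F e c d ∘ bf_hom F (tau e c) idm = tau e (F c d) ∘ s1 F e c d) /\
  (forall (e : E) (c : C) (d : D),
      s2_inv F e c d ∘ tau e (F c d) = bf_hom F idm (tau e d) ∘ s2_inv F e c d).

Definition is_natural {C D W : Category} (F G : Bifunctor C D W)
  (alpha : forall (c : C) (d : D), hom (F c d) (G c d)) : Prop :=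
  forall (c c' : C) (d d' : D) (f : hom c c') (g : hom d d'),
    alpha c' d' ∘ bf_hom F f g = bf_hom G f g ∘ alpha c d.

Arguments is_natural {_ _ _} _ _ _.

Definition is_bal_morphism {E : SymmetricMonoidalCategory} {C D W : BraidedModule E}
  (F G : BilinearBifunctor C D W) (alpha : forall (c : C) (d : D), hom (F c d) (G c d)) : Prop :=
  is_natural (bb_F F) (bb_F G) alpha /\
  (forall (c : C) (e : E) (d : D), alpha c (bl e d) ∘ bal F c e d = bal G c e d ∘ alpha (br c e) d) /\
  (forall (c : C) (e : E) (d : D), s1 G e c d ∘ alpha (bl e c) d = blm idm (alpha c d) ∘ s1 F e c d).
Arguments is_bal_morphism {_ _ _ _} _ _ _.

(* Compatibility of alpha with the balancing b = s2^-1 ∘ s1 ∘ F(tau2, 1), together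
   with its compatibility with s1 and naturality in the first variable, shows that
   alpha commutes with s2^-1 after precomposition with the invertible map
   s1 ∘ F(tau2, 1).  Cancelling it, alpha commutes with s2^-1, hence with s2. *)

Section CategoryFacts.

Variable K : Category.

Lemma comp_cancel_r (a b c : K) (f g : hom b c) (h : hom a b) (h' : hom b a) :
  h ∘ h' = idm -> f ∘ h = g ∘ h -> f = g.
Proof.
  intros Hh Heq.
  rewrite <- (comp_id_r f), <- (comp_id_r g), <- Hh, !comp_assoc, Heq.
  reflexivity.
Qed.

Lemma comp_right_inverse (a b c : K) (f : hom b c) (f' : hom c b)
    (g : hom a b) (g' : hom b a) :
  f ∘ f' = idm -> g ∘ g' = idm -> (f ∘ g) ∘ (g' ∘ f') = idm.
Proof.
  intros Hf Hg.
  rewrite comp_assoc, <- (comp_assoc _ g), Hg, comp_id_r.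
  exact Hf.
Qed.

Lemma square_transpose_iso (a a' b b' : K) (x : hom a b) (y : hom a' b')
    (u : hom a a') (u' : hom a' a) (w : hom b b') (w' : hom b' b) :
  u' ∘ u = idm -> w ∘ w' = idm -> x ∘ u' = w' ∘ y -> w ∘ x = y ∘ u.
Proof.
  intros Hu Hw Hsq.
  rewrite <- (comp_id_r (w ∘ x)), <- Hu, <- comp_assoc, (comp_assoc _ _ x), Hsq.
  rewrite !comp_assoc, Hw, comp_id_l.
  reflexivity.
Qed.

End CategoryFacts.

Lemma bf_hom_l_right_inverse (C D W : Category) (F : Bifunctor C D W)
    (c c' : C) (d : D) (f : hom c c') (f' : hom c' c) :
  f ∘ f' = idm -> bf_hom F f (1_ d) ∘ bf_hom F f' (1_ d) = idm.
Proof.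
  intros Hf.
  rewrite <- bf_comp, Hf, comp_id_l.
  apply bf_id.
Qed.

Section BalancedMorphisms.

Variables (E : SymmetricMonoidalCategory) (C D W : BraidedModule E).
Variables (F G : BilinearBifunctor C D W).
Variable alpha : forall (c : C) (d : D), hom (F c d) (G c d).
Hypothesis Halpha : is_bal_morphism F G alpha.

Lemma bal_morphism_s2_inv (c : C) (e : E) (d : D) :
  alpha c (bl e d) ∘ s2_inv F e c d = s2_inv G e c d ∘ blm (1_ e) (alpha c d).
Proof.
  destruct Halpha as [Hnat [Hbal Hs1]].
  apply comp_cancel_r with (h := s1 F e c d ∘ bf_hom F (tau2 c e) idm)
                           (h' := bf_hom F (tau2_inv c e) idm ∘ s1_inv F e c d).
  - apply comp_right_inverse.
    + apply s1_iso2.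
    + apply bf_hom_l_right_inverse, tau2_iso2.
  - pose proof (Hbal c e d) as Hb; unfold bal in Hb.
    rewrite <- !comp_assoc, <- Hnat, (comp_assoc _ _ (s1 G e c d)), Hs1 in Hb.
    rewrite !comp_assoc in Hb; rewrite !comp_assoc.
    exact Hb.
Qed.

End BalancedMorphisms.

Theorem proposition2p8 (E : SymmetricMonoidalCategory) (C D W : BraidedModule E)
  (F G : BilinearBifunctor C D W)
  (HF : braiding_preserved F) (HG : braiding_preserved G)
  (alpha : forall (c : C) (d : D), hom (F c d) (G c d))
  (Halpha : is_bal_morphism F G alpha) :
  forall (c : C) (e : E) (d : D),
    s2 G e c d ∘ alpha c (bl e d) = blm (@idm _ e) (alpha c d) ∘ s2 F e c d.
Proof.
  intros c e d.
  apply square_transpose_iso with (u' := s2_inv F e c d) (w' := s2_inv G e c d).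
  - apply s2_iso1.
  - apply s2_iso2.
  - apply bal_morphism_s2_inv; exact Halpha.
Qed.
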